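(* The chaotic relaxation for the system $\mathbf{Lx}=\mathbf{b}$ defined by the splitting $\mathbf{D + \tilde{L}}$, with $\mathbf{D}$ nonsingular block diagonal and $\mathbf{\tilde{L}}$ strictly lower block triangular, converges.
   Context: Let $\mathbf{L}\in\mathbb{R}^{n\times n}$ be lower block triangular with square $b\times b$ blocks ($n$ divisible by $b$) and nonsingular diagonal blocks, split as $\mathbf{L}=\mathbf{D}+\tilde{\mathbf{L}}$ with $\mathbf{D}$ its block diagonal part and $\tilde{\mathbf{L}}$ its strictly lower block triangular part. For a splitting $\mathbf{L}=\mathbf{M}+\mathbf{N}$ (here $\mathbf{M}=\mathbf{D}$, $\mathbf{N}=\tilde{\mathbf{L}}$), set $\mathbf{B}:=-\mathbf{M}^{-1}\mathbf{N}$ and $\mathbf{C}:=\mathbf{M}^{-1}$ with rows $\mathbf{c}_i^T$. The chaotic relaxation (Chazan–Miranker) is the iteration $x_i^{j+1}=x_i^j$ if $i\neq u(j)$ and $x_i^{j+1}=\sum_{\alpha=1}^n B_{i\alpha}x_\alpha^{j-s_\alpha(j)}+\mathbf{c}_i^T\mathbf{b}$ if $i=u(j)$, where the shift functions $s_\alpha:\mathbb{N}\to\mathbb{N}$ satisfy $0\le s_\alpha(j)\le\min\{j-1,\hat s\}$ for some fixed $\hat s$, and the update function $u:\mathbb{N}\to\{1,\dots,n\}$ is such that for every $i$ and every $j$ there is $l>j$ with $u(l)=i$. Chazan–Miranker's theorem: such a scheme converges if $\rho(|\mathbf{B}|)<1$. *)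

From HB Require Import structures.
From mathcomp Require Import all_boot all_order all_algebra.
From mathcomp Require Import all_classical all_reals all_analysis.
Set Implicit Arguments. Unset Strict Implicit. Unset Printing Implicit Defensive.
Import Order.TTheory GRing.Theory Num.Theory.
Local Open Scope ring_scope.

(* Matrices of size n = m * b, partitioned into m x m square blocks of size b.
   The block index of a row/column i : 'I_(m*b) is i %/ b. *)

Lemma blk_idx_subproof (m b : nat) (k : 'I_m) (p : 'I_b) : (k * b + p < m * b)%N.
Proof.
have hk := ltn_ord k; have hp := ltn_ord p.
apply: (leq_trans (n := k * b + b)); first by rewrite ltn_add2l.
by rewrite -mulSnr leq_mul2r hk orbT.
Qed.

Definition blk_idx (m b : nat) (k : 'I_m) (p : 'I_b) : 'I_(m * b) :=
  Ordinal (blk_idx_subproof k p).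

Definition diag_block {R : Type} (m b : nat) (A : 'M[R]_(m * b)) (k : 'I_m) : 'M[R]_b :=
  \matrix_(p, q) A (blk_idx k p) (blk_idx k q).

Definition lower_block_triangular {R : pzRingType} (m b : nat) (A : 'M[R]_(m * b)) :=
  forall i j : 'I_(m * b), (i %/ b < j %/ b)%N -> A i j = 0.

Definition block_diag_part {R : pzRingType} (m b : nat) (A : 'M[R]_(m * b)) : 'M[R]_(m * b) :=
  \matrix_(i, j) (if (i %/ b == j %/ b)%N then A i j else 0).

Definition strict_lower_part {R : pzRingType} (m b : nat) (A : 'M[R]_(m * b)) : 'M[R]_(m * b) :=
  A - block_diag_part A.

(* Chaotic relaxation (Chazan--Miranker) for the splitting A = M + N,
   B := - M^{-1} N, C := M^{-1}.  Time is shifted to start at 0: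
   x 0 is the arbitrary initial vector (the paper's x^1), and the paper's
   constraint 0 <= s_a(j) <= min(j-1, shat) for j >= 1 becomes s a j <= min(j, shat). *)
Definition chaotic_relaxation {R : comUnitRingType} (n : nat) (M N : 'M[R]_n) (bv : 'cV[R]_n)
    (shat : nat) (s : 'I_n -> nat -> nat) (u : nat -> 'I_n) (x : nat -> 'cV[R]_n) : Prop :=
  let B := - (invmx M *m N) in
  let C := invmx M in
  [/\ (forall a j, (s a j <= minn j shat)%N),
      (forall (i : 'I_n) (j : nat), exists l : nat, (j < l)%N /\ u l = i) &
      (forall (j : nat) (i : 'I_n),
         x j.+1 i 0 = if i == u j
                      then \sum_(a < n) B i a * x (j - s a j)%N a 0 + (C *m bv) i 0
                      else x j i 0)].

From HB Require Import structures.
From mathcomp Require Import all_boot all_order all_algebra.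
From mathcomp Require Import all_classical all_reals all_analysis.
From mathcomp Require Import zify.
Set Implicit Arguments. Unset Strict Implicit. Unset Printing Implicit Defensive.
Import Order.TTheory GRing.Theory Num.Theory.
Import numFieldNormedType.Exports.
Local Open Scope classical_set_scope.
Local Open Scope ring_scope.

(* Since D is block diagonal, so is D^-1, and B = - D^-1 L~ is strictly lower
   block triangular: an update of a component of block k only reads components
   of blocks before k. By induction on k every component is eventually
   constant: once the earlier blocks have settled, the delays being bounded by
   shat, all later updates of a component of block k return the same value,
   and each component is updated infinitely often. The limit xs is a fixed
   point xs = B xs + D^-1 b, i.e. (D + L~) xs = b. *)

Section BlockIndices.
Variables m b : nat.
Implicit Types (i j : 'I_(m * b)) (k : 'I_m) (p : 'I_b).

Lemma blk_size_gt0 i : (0 < b)%N.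
Proof. by case: b i => [|//] [i /=]; rewrite muln0. Qed.

Lemma blk_of_subproof i : (i %/ b < m)%N.
Proof. by rewrite ltn_divLR ?(blk_size_gt0 i). Qed.

Lemma blk_off_subproof i : (i %% b < b)%N.
Proof. by rewrite ltn_pmod ?(blk_size_gt0 i). Qed.

Definition blk_of i : 'I_m := Ordinal (blk_of_subproof i).
Definition blk_off i : 'I_b := Ordinal (blk_off_subproof i).

Lemma blk_idx_div k p : (blk_idx k p %/ b)%N = k.
Proof. by rewrite /= divnMDl ?divn_small ?addn0 // (leq_ltn_trans _ (ltn_ord p)). Qed.

Lemma blk_of_idx k p : blk_of (blk_idx k p) = k.
Proof. exact/val_inj/blk_idx_div. Qed.

Lemma blk_off_idx k p : blk_off (blk_idx k p) = p.
Proof. by apply: val_inj; rewrite /= modnMDl modn_small. Qed.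

Lemma blk_idxK i : blk_idx (blk_of i) (blk_off i) = i.
Proof. by apply: val_inj; rewrite /= -divn_eq. Qed.

Lemma blk_eq i j : (i == j) = (i %/ b == j %/ b)%N && (blk_off i == blk_off j).
Proof.
apply/eqP/andP => [-> //|[/eqP ek /eqP ep]].
have ek' : blk_of i = blk_of j by apply: val_inj.
by rewrite -[i]blk_idxK -[j]blk_idxK ek' ep.
Qed.

Lemma sum_blk (V : nmodType) (F : 'I_(m * b) -> V) :
  \sum_i F i = \sum_k \sum_p F (blk_idx k p).
Proof.
rewrite pair_big (reindex (fun kp : 'I_m * 'I_b => blk_idx kp.1 kp.2)) //=.
by exists (fun i => (blk_of i, blk_off i)) => [[k p] _|i _];
  rewrite ?blk_of_idx ?blk_off_idx ?blk_idxK.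
Qed.

End BlockIndices.

Section BlockDiagonal.
Variables (R : pzRingType) (m b : nat).
Implicit Types (i j : 'I_(m * b)) (F G : 'I_m -> 'M[R]_b) (A L : 'M[R]_(m * b)).

Definition block_diag_mx F : 'M[R]_(m * b) :=
  \matrix_(i, j) if (i %/ b == j %/ b)%N then F (blk_of i) (blk_off i) (blk_off j) else 0.

Definition strictly_lower_block_triangular A :=
  forall i j, (i %/ b <= j %/ b)%N -> A i j = 0.

Lemma block_diag_partE L : block_diag_part L = block_diag_mx (diag_block L).
Proof.
apply/matrixP => i j; rewrite !mxE; case: eqP => // eij.
have eb : blk_of i = blk_of j by apply: val_inj.
by rewrite {2}eb !blk_idxK.
Qed.

Lemma mul_block_diag_mx F G :
  block_diag_mx F *m block_diag_mx G = block_diag_mx (fun k => F k *m G k).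
Proof.
apply/matrixP => i j; rewrite !mxE sum_blk (bigD1 (blk_of i)) //=.
rewrite [X in _ + X]big1 ?addr0 => [|k nki]; last first.
  by rewrite big1 // => p _; rewrite !mxE blk_idx_div ifN ?mul0r // eq_sym.
under eq_bigr do rewrite !mxE blk_idx_div blk_of_idx blk_off_idx eqxx.
by case: eqP => // _; rewrite big1 // => p _; rewrite mulr0.
Qed.

Lemma block_diag_mx1 : block_diag_mx (fun=> 1%:M) = 1%:M.
Proof. by apply/matrixP => i j; rewrite !mxE blk_eq; case: ifP. Qed.

Lemma strictly_lower_strict_lower_part L :
  lower_block_triangular L -> strictly_lower_block_triangular (strict_lower_part L).
Proof.
move=> lowL i j; rewrite leq_eqVlt !mxE => /orP[/eqP eij|lij].
  by rewrite eij eqxx subrr.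
by rewrite lowL // ifN ?subrr // neq_ltn lij.
Qed.

Lemma strictly_lower_block_diag_mul F A :
  strictly_lower_block_triangular A ->
  strictly_lower_block_triangular (block_diag_mx F *m A).
Proof.
move=> lowA i j le_ij; rewrite mxE big1 // => l _; rewrite mxE.
by case: eqP => [eil|_]; rewrite ?mul0r // lowA ?mulr0 // -eil.
Qed.

Lemma strictly_lower_opp A :
  strictly_lower_block_triangular A -> strictly_lower_block_triangular (- A).
Proof. by move=> lowA i j /lowA; rewrite mxE => ->; rewrite oppr0. Qed.

End BlockDiagonal.

Section BlockInverse.
Variables (R : comUnitRingType) (m b : nat).

Section Invertible.
Variable F : 'I_m -> 'M[R]_b.
Hypothesis F_unit : forall k, F k \in unitmx.

Lemma mul_block_diag_mxV :
  block_diag_mx F *m block_diag_mx (fun k => invmx (F k)) = 1%:M.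
Proof.
rewrite mul_block_diag_mx -block_diag_mx1; congr block_diag_mx.
by apply/funext => k; rewrite mulmxV.
Qed.

Lemma block_diag_mx_unit : block_diag_mx F \in unitmx.
Proof. exact: (mulmx1_unit mul_block_diag_mxV).1. Qed.

Lemma invmx_block_diag_mx :
  invmx (block_diag_mx F) = block_diag_mx (fun k => invmx (F k)).
Proof. by rewrite -[RHS](mulKmx block_diag_mx_unit) mul_block_diag_mxV mulmx1. Qed.

End Invertible.

Section BlockJacobi.
Variable L : 'M[R]_(m * b).
Hypotheses (lowL : lower_block_triangular L)
  (diagL_unit : forall k, diag_block L k \in unitmx).

Lemma block_diag_part_unit : block_diag_part L \in unitmx.
Proof. by rewrite block_diag_partE block_diag_mx_unit. Qed.

Lemma strictly_lower_block_jacobi_iteration :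
  strictly_lower_block_triangular (- (invmx (block_diag_part L) *m strict_lower_part L)).
Proof.
rewrite block_diag_partE invmx_block_diag_mx //.
exact/strictly_lower_opp/strictly_lower_block_diag_mul/strictly_lower_strict_lower_part.
Qed.

End BlockJacobi.
End BlockInverse.

Section ChaoticRelaxation.
Variables (R : pzSemiRingType) (n shat : nat) (B : 'M[R]_n) (c : 'cV[R]_n).
Variables (level : 'I_n -> nat) (s : 'I_n -> nat -> nat) (u : nat -> 'I_n).
Variable x : nat -> 'cV[R]_n.

Let update j i := \sum_a B i a * x (j - s a j)%N a 0 + c i 0.

Hypotheses (B_lower : forall i a, (level i <= level a)%N -> B i a = 0)
  (s_bounded : forall a j, (s a j <= shat)%N)
  (u_fair : forall i j, exists l, (j < l)%N /\ u l = i)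
  (x_step : forall j i, x j.+1 i 0 = if i == u j then update j i else x j i 0).

Lemma update_settled T (v : 'cV[R]_n) i :
    (forall a, (level a < level i)%N -> forall j, (T <= j)%N -> x j a 0 = v a 0) ->
  forall j, (T + shat <= j)%N -> update j i = (B *m v + c) i 0.
Proof.
move=> xv j le_j; rewrite !mxE; congr (_ + _); apply: eq_bigr => a _.
have [lt_ai|le_ia] := ltnP (level a) (level i); last by rewrite B_lower ?mul0r.
by rewrite xv //; have := s_bounded a j; lia.
Qed.

Lemma settled_after_updates T V i :
    (forall j, (T <= j)%N -> u j = i -> update j i = V) ->
  exists T', forall j, (T' <= j)%N -> x j i 0 = V.
Proof.
move=> upd; have [l [lt_Tl uli]] := u_fair i T.
exists l.+1; elim=> // j IHj; rewrite ltnS leq_eqVlt => /orP[/eqP <-|lt_lj].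
  by rewrite x_step uli eqxx; apply: upd => //; exact: ltnW.
rewrite x_step; case: eqP => [ij|_]; last exact: IHj.
by apply: upd; [lia | rewrite ij].
Qed.

Lemma settled_family (P : pred 'I_n) :
    (forall a, P a -> exists v T, forall j, (T <= j)%N -> x j a 0 = v) ->
  exists (v : 'cV[R]_n) T, forall a, P a -> forall j, (T <= j)%N -> x j a 0 = v a 0.
Proof.
move=> settled.
have /fin_all_exists [f xf] : forall a, exists vT : R * nat,
    P a -> forall j, (vT.2 <= j)%N -> x j a 0 = vT.1.
  move=> a; have [/settled [v [T xv]]|_] := boolP (P a); first by exists (v, T).
  by exists (0, 0%N).
exists (\col_a (f a).1), (\max_a (f a).2) => a Pa j le_j; rewrite mxE.
exact: xf (leq_trans (leq_bigmax a) le_j).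
Qed.

Lemma chaotic_relaxation_settled :
  exists (xs : 'cV[R]_n) T, forall a j, (T <= j)%N -> x j a 0 = xs a 0.
Proof.
have coord_settled i : exists v T, forall j, (T <= j)%N -> x j i 0 = v.
  have [k] := ubnP (level i); elim: k i => // k IHk i; rewrite ltnS => le_ik.
  have [v [T xv]] := @settled_family (fun a => level a < level i)%N
    (fun a lt_ai => IHk a (leq_trans lt_ai le_ik)).
  exists ((B *m v + c) i 0).
  apply: (settled_after_updates (T := T + shat)) => j le_j _.
  exact: update_settled xv j le_j.
have [xs [T xT]] := settled_family (P := predT) (fun a _ => coord_settled a).
by exists xs, T => a; apply: xT.
Qed.

Lemma chaotic_relaxation_fixpoint (xs : 'cV[R]_n) T :
  (forall a j, (T <= j)%N -> x j a 0 = xs a 0) -> xs = B *m xs + c.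
Proof.
move=> xT; apply/matrixP => i k; rewrite ord1.
have [l [lt_l uli]] := u_fair i (T + shat).
rewrite -(xT i l.+1); last by lia.
by rewrite x_step uli eqxx (update_settled (fun a _ => xT a)) //; exact: ltnW.
Qed.

End ChaoticRelaxation.

Lemma splitting_fixpoint (R : comUnitRingType) n (M N : 'M[R]_n) (bv xs : 'cV[R]_n) :
  M \in unitmx -> xs = - (invmx M *m N) *m xs + invmx M *m bv -> (M + N) *m xs = bv.
Proof.
move=> M_unit xs_fix; rewrite mulmxDl {1}xs_fix mulmxDr mulmxA mulmxN !mulKVmx //.
by rewrite mulNmx addrAC addNr add0r.
Qed.

Theorem theorem2 (R : realType) (m b : nat) (L : 'M[R]_(m * b)) (bv : 'cV[R]_(m * b))
    (hL : lower_block_triangular L)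
    (hD : forall k : 'I_m, diag_block L k \in unitmx)
    (shat : nat) (s : 'I_(m * b) -> nat -> nat) (u : nat -> 'I_(m * b))
    (x : nat -> 'cV[R]_(m * b))
    (hx : chaotic_relaxation (block_diag_part L) (strict_lower_part L) bv shat s u x) :
  exists xs : 'cV[R]_(m * b),
    L *m xs = bv /\ forall i : 'I_(m * b), (fun j => x j i 0) @ \oo --> xs i 0.
Proof.
case: hx => s_le u_fair x_step.
have s_bounded a j : (s a j <= shat)%N := leq_trans (s_le a j) (geq_minr _ _).
have B_lower := strictly_lower_block_jacobi_iteration hL hD.
have [xs [T xT]] := chaotic_relaxation_settled B_lower s_bounded u_fair x_step.
exists xs; split; last first.
  by move=> i; apply: cvg_near_cst; exists T => // j /= le_Tj; rewrite xT.
have -> : L = block_diag_part L + strict_lower_part L by rewrite addrC subrK.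
exact: splitting_fixpoint (block_diag_part_unit hD)
  (chaotic_relaxation_fixpoint B_lower s_bounded u_fair x_step xT).
Qed.
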